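(* For every $\gamma > 0$ and $0 < \alpha < 1$, the following holds for all sufficiently large $n$. Let $G$ be an $(n,(3-\gamma)n)$-multigraph and $M$ a rainbow matching of maximum size in $G$ which has a $7$-auxiliary matching $N$ of size at least $(1-\gamma)|M|$. Then $|N_\alpha| \le \frac{20\gamma}{1-\alpha}\, n$.
   Context: An $(n,v)$-multigraph is a multigraph whose edges are coloured with a set of $n$ colours (parallel edges allowed, with distinct colours) such that each colour class is a vertex-disjoint union of cliques on at least $2$ vertices which together have at least $v$ vertices. A rainbow matching is a matching whose edges have pairwise distinct colours. Let $V$ be the vertex set of $G$ and $C_0$ the set of colours not used on $M$. A $t$-auxiliary matching for $M$ is a matching $N$ each of whose edges has one endpoint in $V\setminus V(M)$ and the other in $V(M)$, such that for each edge of $N$ its pair of endpoints is joined by edges of at least $t$ distinct colours from $C_0$, and no two edges of $N$ intersect the same edge of $M$. $M_N\subseteq M$ is the set of edges of $M$ intersecting an edge of $N$; for $e\in M_N$, $x_e$ is the endpoint of $e$ in $V(N)$, $m(x_e)$ the other endpoint of $e$, and $v_e$ the vertex matched to $x_e$ in $N$; $C_N$ is the set of colours of edges of $M_N$. $N_\alpha \subseteq N$ is the set of edges $v_e x_e \in N$ such that the pair $v_e m(x_e)$ is joined by edges of at most $\alpha |C_N|$ distinct colours from $C_N$. *)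

From HB Require Import structures.
From mathcomp Require Import all_boot all_order all_algebra.
From mathcomp Require Export reals.
Set Implicit Arguments. Unset Strict Implicit. Unset Printing Implicit Defensive.
Import Order.TTheory GRing.Theory Num.Theory.
Local Open Scope ring_scope.

Section Defs.
Variables (V : finType) (n : nat).

(* A colouring: for each colour c : 'I_n, the family col c of cliques
   (vertex sets) forming colour class c. *)
Implicit Types (col : 'I_n -> {set {set V}}).

Definition nv_multigraph (R : realType) col (v : R) : Prop :=
  forall c : 'I_n,
    [/\ trivIset (col c),
        (forall K, K \in col c -> (2 <= #|K|)%N)
      & v <= (#|cover (col c)|)%:R].

Definition cedge col (c : 'I_n) (x y : V) : bool :=
  (x != y) && [exists K in col c, (x \in K) && (y \in K)].

Definition is_edge col (e : {set V} * 'I_n) : bool :=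
  (#|e.1| == 2)%N && [exists K in col e.2, e.1 \subset K].

Definition is_rainbow_matching col (M : {set {set V} * 'I_n}) : Prop :=
  [/\ forall e, e \in M -> is_edge col e,
      forall e e', e \in M -> e' \in M -> e != e' -> [disjoint e.1 & e'.1]
    & forall e e', e \in M -> e' \in M -> e != e' -> e.2 != e'.2].

Definition is_max_rainbow_matching col (M : {set {set V} * 'I_n}) : Prop :=
  is_rainbow_matching col M /\
  forall M', is_rainbow_matching col M' -> (#|M'| <= #|M|)%N.

Definition VM (M : {set {set V} * 'I_n}) : {set V} := \bigcup_(e in M) e.1.

Definition colsM (M : {set {set V} * 'I_n}) : {set 'I_n} := [set e.2 | e in M].
Definition C0 (M : {set {set V} * 'I_n}) : {set 'I_n} := ~: colsM M.

Definition cols_between col (S : {set 'I_n}) (x y : V) : {set 'I_n} :=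
  [set c in S | cedge col c x y].

Definition aux_matching col (M : {set {set V} * 'I_n}) (t : nat)
    (N : {set {set V}}) : Prop :=
  [/\ forall f, f \in N -> exists u w, [/\ f = [set u; w], u \notin VM M,
                                          w \in VM M
                                        & (t <= #|cols_between col (C0 M) u w|)%N],
      forall f f', f \in N -> f' \in N -> f != f' -> [disjoint f & f']
    & forall f f' e, f \in N -> f' \in N -> e \in M -> f != f' ->
        ~~ ((f :&: e.1 != set0) && (f' :&: e.1 != set0))].

Definition M_N (M : {set {set V} * 'I_n}) (N : {set {set V}}) :=
  [set e in M | [exists f in N, f :&: e.1 != set0]].

Definition C_N (M : {set {set V} * 'I_n}) (N : {set {set V}}) : {set 'I_n} :=
  colsM (M_N M N).

(* N_alpha: edges v_e x_e of N such that v_e m(x_e) is joined by at most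
   alpha |C_N| colours of C_N.  Here e.1 = {x, y}, x = x_e, y = m(x_e),
   v = v_e. *)
Definition N_alpha (R : realType) col (M : {set {set V} * 'I_n})
    (N : {set {set V}}) (alpha : R) : {set {set V}} :=
  [set f in N | [exists e in M_N M N, [exists x, [exists y, [exists v,
      [&& e.1 == [set x; y], x != y, f == [set v; x], v \notin VM M &
          (#|cols_between col (C_N M N) v y|%:R <= alpha * #|C_N M N|%:R)%R]]]]]].

End Defs.

From HB Require Import structures.
From mathcomp Require Import all_boot all_order all_algebra.
From mathcomp Require Import reals.
From mathcomp Require Import zify lra.
Import Order.TTheory GRing.Theory Num.Theory.
Set Implicit Arguments. Unset Strict Implicit. Unset Printing Implicit Defensive.

(* Write f in N as v_f x_f, with x_f on the edge e_f = x_f y_f of M of colour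
   c_f; the c_f are distinct, so |C_N| = |N|.  Maximality of M forbids many
   configurations: deleting the edges e_f (f in D) from M, recolouring up to
   three edges v_f x_f with distinct colours of C_0 (each such pair is joined
   by at least three of them), and adding a rainbow matching on the freed
   vertices in the colours c_f would enlarge M.  Hence
   each colour class c_h, which covers at least (3 - gamma) n vertices, lies
   essentially in the 3|N| vertices v_f, x_f, y_f and the vertices of V(M) off
   M_N, up to as many vertices as there are f with v_f y_f not joined in c_h.
   Summing over h, double counting the pairs (h, f) such that c_h joins v_f
   and y_f, and using |M_N| >= (1 - gamma)|M| gives
   (1 - alpha)|N_alpha| <= 2 gamma n + 5. *)

Lemma card_bigcup_le (I T : finType) (A : {set I}) (F : I -> {set T}) :
  (#|\bigcup_(i in A) F i| <= \sum_(i in A) #|F i|)%N.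
Proof.
elim/big_rec2: _ => [|i x y _ le]; first by rewrite cards0.
by apply: leq_trans (leq_card_setU _ _).1 _; rewrite leq_add2l.
Qed.

Lemma sum_nat_of_bool (T : finType) (A : {set T}) (P : pred T) :
  (\sum_(x in A) P x)%N = #|[set x in A | P x]|.
Proof.
rewrite -sum1dep_card big_mkcondr /=.
by apply: eq_bigr => x _; case: (P x).
Qed.

Lemma card_sum_mem (T : finType) (A B : {set T}) : A \subset B ->
  #|A| = (\sum_(x in B) (x \in A))%N.
Proof.
move=> sAB; rewrite sum_nat_of_bool; apply: eq_card => x; rewrite inE.
by case: (boolP (x \in A)) => xA; rewrite ?andbF ?andbT // (subsetP sAB).
Qed.

Lemma card_set3_le (T : finType) (a b c : T) : (#|[set a; b; c]| <= 3)%N.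
Proof.
apply: leq_trans (card_size [:: a; b; c]); apply: subset_leq_card.
by apply/subsetP => x; rewrite !inE => /orP[/orP[]|]/eqP->; rewrite ?in_cons eqxx ?orbT.
Qed.

Lemma card_set4_le (T : finType) (a b c e : T) : (#|[set a; b; c; e]| <= 4)%N.
Proof.
apply: leq_trans (card_size [:: a; b; c; e]); apply: subset_leq_card.
by apply/subsetP => x; rewrite !inE => /orP[/orP[/orP[]|]|]/eqP->;
  rewrite ?in_cons eqxx ?orbT.
Qed.

Lemma pick_set2 (T : finType) (P : pred T) (a b : T) :
  ~~ P a -> P b -> [pick u in [set a; b] | P u] = Some b.
Proof.
move=> Pa Pb; case: pickP => [z /andP[] | /(_ b)]; last by rewrite !inE eqxx orbT Pb.
by rewrite !inE => /orP[]/eqP-> //; rewrite (negbTE Pa).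
Qed.

Lemma count_arith (R : realFieldType) (gamma alpha n m p z a : R) :
  (0 <= gamma -> m <= n -> (1 - gamma) * m <= p -> z + 2 * p <= 2 * m ->
   1 < gamma * n -> (3 - gamma) * n + (1 - alpha) * a <= 3 * p + 2 * z + 5 ->
   (1 - alpha) * a <= 20 * gamma * n)%R.
Proof.
move=> g0 mn mp zm gn key.
have : (gamma * m <= gamma * n)%R by rewrite ler_wpM2l.
nra.
Qed.

Section Colouring.
Variables (V : finType) (n : nat) (col : 'I_n -> {set {set V}}).

Lemma cedge_sym c x y : cedge col c x y -> cedge col c y x.
Proof.
rewrite /cedge => /andP[ne /existsP[K /andP[KK /andP[xK yK]]]].
by rewrite eq_sym ne; apply/existsP; exists K; rewrite KK xK yK.
Qed.

Lemma cedgexx c x : ~~ cedge col c x x.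
Proof. by rewrite /cedge eqxx. Qed.

Lemma cedge_is_edge c x y : cedge col c x y -> is_edge col ([set x; y], c).
Proof.
case/andP => ne /existsP[K /andP[KK /andP[xK yK]]].
rewrite /is_edge /= cards2 ne eqxx /=; apply/existsP; exists K.
by rewrite KK; apply/subsetP => z; rewrite !inE => /orP[]/eqP->.
Qed.

Hypothesis col_triv : forall c, trivIset (col c).
Hypothesis col_big : forall c K, K \in col c -> (2 <= #|K|)%N.

Lemma cedge_trans c x y z : cedge col c x y -> cedge col c y z -> x != z ->
  cedge col c x z.
Proof.
move=> /andP[_ /existsP[K /andP[KK /andP[xK yK]]]].
move=> /andP[_ /existsP[K' /andP[KK' /andP[yK' zK']]]] xz.
rewrite /cedge xz; apply/existsP; exists K; rewrite KK xK /=.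
have [-> //|neK] := eqVneq K K'.
by have /disjointFr/(_ yK) := trivIsetP (col_triv c) K K' KK KK' neK; rewrite yK'.
Qed.

Lemma cover_cedge c x : x \in cover (col c) -> exists y, cedge col c x y.
Proof.
move=> /bigcupP[K KK xK].
have : (1 < #|K|)%N by exact: col_big KK.
rewrite (cardsD1 x K) xK ltnS card_gt0 => /set0Pn[y].
rewrite !inE => /andP[yx yK]; exists y.
by rewrite /cedge eq_sym yx; apply/existsP; exists K; rewrite KK xK yK.
Qed.

Definition rainbow_compatible (e e' : {set V} * 'I_n) :=
  [disjoint e.1 & e'.1] && (e.2 != e'.2).

Lemma rainbow_compatible_sym e e' :
  rainbow_compatible e e' -> rainbow_compatible e' e.
Proof. by rewrite /rainbow_compatible disjoint_sym eq_sym. Qed.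

Lemma rainbow_matchingS (S T : {set {set V} * 'I_n}) : S \subset T ->
  is_rainbow_matching col T -> is_rainbow_matching col S.
Proof. by move=> /subsetP sST [T1 T2 T3]; split=> *; auto. Qed.

Lemma rainbow_matchingU (S T : {set {set V} * 'I_n}) :
  is_rainbow_matching col S -> is_rainbow_matching col T ->
  (forall e e', e \in S -> e' \in T -> rainbow_compatible e e') ->
  is_rainbow_matching col (S :|: T).
Proof.
move=> [S1 S2 S3] [T1 T2 T3] ST; split.
- by move=> e; rewrite inE => /orP[]; [exact: S1|exact: T1].
- move=> e e'; rewrite !inE => /orP[]eS /orP[]e'S ne.
  + exact: S2.
  + by case/andP: (ST _ _ eS e'S).
  + by case/andP: (rainbow_compatible_sym (ST _ _ e'S eS)).
  + exact: T2.
- move=> e e'; rewrite !inE => /orP[]eS /orP[]e'S ne.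
  + exact: S3.
  + by case/andP: (ST _ _ eS e'S).
  + by case/andP: (rainbow_compatible_sym (ST _ _ e'S eS)).
  + exact: T3.
Qed.

Lemma card_rainbow_matchingU (S T : {set {set V} * 'I_n}) :
  is_rainbow_matching col S ->
  (forall e e', e \in S -> e' \in T -> rainbow_compatible e e') ->
  #|S :|: T| = (#|S| + #|T|)%N.
Proof.
move=> [S1 _ _] ST; rewrite -cardsUI.
suff ->: S :&: T = set0 by rewrite cards0 addn0.
apply/setP => e; rewrite !inE; apply/negP => /andP[eS eT].
have /andP[/disjointFr dis _] := ST e e eS eT.
have /andP[/eqP e2 _] := S1 e eS.
have /set0Pn[x xe] : e.1 != set0 by rewrite -card_gt0 e2.
by have := dis x xe; rewrite xe.
Qed.

Lemma rainbow_matching1 c x y : cedge col c x y ->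
  is_rainbow_matching col [set ([set x; y], c)].
Proof.
move=> ce; split=> [e|e e'|e e']; rewrite ?inE; last 2 first.
- by move=> /eqP-> /eqP->; rewrite eqxx.
- by move=> /eqP-> /eqP->; rewrite eqxx.
by move/eqP->; exact: cedge_is_edge.
Qed.

Lemma rainbow_matching2 c c' x y x' y' :
  cedge col c x y -> cedge col c' x' y' -> c != c' ->
  [disjoint [set x; y] & [set x'; y']] ->
  is_rainbow_matching col [set ([set x; y], c); ([set x'; y'], c')].
Proof.
move=> ce ce' cc dis; split=> [e|e e'|e e']; rewrite ?inE.
- by move=> /orP[]/eqP->; apply: cedge_is_edge.
- by move=> /orP[]/eqP-> /orP[]/eqP->; rewrite ?eqxx //= => _; rewrite disjoint_sym.
- by move=> /orP[]/eqP-> /orP[]/eqP->; rewrite ?eqxx //= => _; rewrite eq_sym.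
Qed.

End Colouring.

Section AuxiliaryMatching.
Variables (V : finType) (n : nat) (col : 'I_n -> {set {set V}}).
Variables (M : {set {set V} * 'I_n}) (N : {set {set V}}) (t : nat).
Variables (d : V) (de : {set V} * 'I_n).
Hypothesis col_triv : forall c, trivIset (col c).
Hypothesis col_big : forall c K, K \in col c -> (2 <= #|K|)%N.
Hypothesis M_max : is_max_rainbow_matching col M.
Hypothesis N_aux : aux_matching col M t N.

(* For f = v_e x_e in N with x_e on e = x_e m(x_e) in M:
   vN f = v_e, xN f = x_e, eN f = e, yN f = m(x_e) and cN f is the colour of e.
   The defaults d and de are junk values, only returned off N. *)
Definition vN (f : {set V}) := odflt d [pick u in f | u \notin VM M].
Definition xN (f : {set V}) := odflt d [pick u in f | u \in VM M].
Definition eN (f : {set V}) := odflt de [pick e in M | xN f \in e.1].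
Definition yN (f : {set V}) := odflt d [pick u in (eN f).1 | u != xN f].
Definition cN (f : {set V}) := (eN f).2.

Lemma VMP x : reflect (exists2 e, e \in M & x \in e.1) (x \in VM M).
Proof. by apply: (iffP bigcupP) => -[e]; exists e. Qed.

Lemma M_rainbow : is_rainbow_matching col M.
Proof. by case: M_max. Qed.

Lemma M_edge e : e \in M -> is_edge col e.
Proof. by case: M_rainbow => H _ _; exact: H. Qed.

Lemma M_disjoint e e' : e \in M -> e' \in M -> e != e' -> [disjoint e.1 & e'.1].
Proof. by case: M_rainbow => _ H _; exact: H. Qed.

Lemma M_colour_neq e e' : e \in M -> e' \in M -> e != e' -> e.2 != e'.2.
Proof. by case: M_rainbow => _ _ H; exact: H. Qed.

Lemma M_eq_of_mem e e' x : e \in M -> e' \in M -> x \in e.1 -> x \in e'.1 ->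
  e = e'.
Proof.
move=> eM e'M xe; apply: contraTeq => /(M_disjoint eM e'M)/disjointFr.
by move=> /(_ _ xe) ->.
Qed.

Lemma neq_notin_VM u z : u \notin VM M -> z \in VM M -> u != z.
Proof. by move=> uV zV; apply: contraNneq uV => ->. Qed.

Section OneEdgeOfN.
Variable f : {set V}.
Hypothesis fN : f \in N.

Lemma N_edge_spec : [/\ f = [set vN f; xN f], vN f \notin VM M, xN f \in VM M
   & (t <= #|cols_between col (C0 M) (vN f) (xN f)|)%N].
Proof.
have [u [w [-> uV wV ut]]] : exists u w, [/\ f = [set u; w], u \notin VM M,
    w \in VM M & (t <= #|cols_between col (C0 M) u w|)%N].
  by case: N_aux => H _ _; exact: H.
have -> : vN [set u; w] = u by rewrite /vN setUC pick_set2 ?negbK.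
by rewrite /xN pick_set2.
Qed.

Lemma N_edgeE : f = [set vN f; xN f]. Proof. by case: N_edge_spec. Qed.
Lemma vN_notin_VM : vN f \notin VM M. Proof. by case: N_edge_spec. Qed.
Lemma xN_in_VM : xN f \in VM M. Proof. by case: N_edge_spec. Qed.
Lemma notin_C0 e : e \in M -> e.2 \notin C0 M.
Proof. by move=> eM; rewrite inE negbK; apply: imset_f. Qed.

Lemma free_colours_vN_xN : (t <= #|cols_between col (C0 M) (vN f) (xN f)|)%N.
Proof. by case: N_edge_spec. Qed.

Lemma vN_in : vN f \in f. Proof. by rewrite {2}N_edgeE !inE eqxx. Qed.
Lemma xN_in : xN f \in f. Proof. by rewrite {2}N_edgeE !inE eqxx orbT. Qed.

Lemma eN_spec : eN f \in M /\ xN f \in (eN f).1.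
Proof.
rewrite /eN; case: pickP => [e /andP[]//|].
by have /VMP[e eM xe] := xN_in_VM => /(_ e); rewrite eM xe.
Qed.

Lemma eN_in_M : eN f \in M. Proof. by case: eN_spec. Qed.
Lemma xN_in_eN : xN f \in (eN f).1. Proof. by case: eN_spec. Qed.

Lemma eN_spec2 : (eN f).1 = [set xN f; yN f] /\ yN f != xN f.
Proof.
have [y [xy exy]] : exists y, xN f != y /\ (eN f).1 = [set xN f; y].
  have /andP[/cards2P[a [b [ab eab]]] _] := M_edge eN_in_M.
  have := xN_in_eN; rewrite eab !inE => /orP[]/eqP->.
  - by exists b.
  - by exists a; rewrite setUC eq_sym.
have -> : yN f = y by rewrite /yN exy pick_set2 ?eqxx // eq_sym.
by rewrite exy eq_sym.
Qed.

Lemma eN_eq : (eN f).1 = [set xN f; yN f]. Proof. by case: eN_spec2. Qed.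
Lemma yN_neq_xN : yN f != xN f. Proof. by case: eN_spec2. Qed.
Lemma yN_in_eN : yN f \in (eN f).1. Proof. by rewrite eN_eq !inE eqxx orbT. Qed.
Lemma yN_in_VM : yN f \in VM M.
Proof. by apply/VMP; exists (eN f); [exact: eN_in_M|exact: yN_in_eN]. Qed.

Lemma notin_eN e z : e \in M -> e != eN f -> z \in (eN f).1 -> z \notin e.1.
Proof.
by move=> eM ne zf; apply: contra ne => ze; rewrite (M_eq_of_mem eM eN_in_M ze zf).
Qed.

End OneEdgeOfN.

Section TwoEdgesOfN.
Variables (f g : {set V}).
Hypotheses (fN : f \in N) (gN : g \in N).

Lemma eN_neq : f != g -> eN f != eN g.
Proof.
move=> fg; apply/eqP => efg.
case: N_aux => _ _ /(_ f g (eN f) fN gN (eN_in_M fN) fg)/negP; apply.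
apply/andP; split; apply/set0Pn; [exists (xN f)|exists (xN g)].
- by rewrite inE xN_in // xN_in_eN.
- by rewrite inE xN_in // efg xN_in_eN.
Qed.

Lemma cN_neq : f != g -> cN f != cN g.
Proof. by move=> fg; exact: M_colour_neq (eN_in_M fN) (eN_in_M gN) (eN_neq fg). Qed.

Lemma eN_disjoint : f != g -> [disjoint (eN f).1 & (eN g).1].
Proof. by move=> fg; exact: M_disjoint (eN_in_M fN) (eN_in_M gN) (eN_neq fg). Qed.

Lemma xN_neq : f != g -> xN f != xN g.
Proof.
move=> fg; apply: contraTneq (xN_in_eN gN) => <-.
by rewrite (disjointFr (eN_disjoint fg) (xN_in_eN fN)).
Qed.

Lemma yN_neq : f != g -> yN f != yN g.
Proof.
move=> fg; apply: contraTneq (yN_in_eN gN) => <-.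
by rewrite (disjointFr (eN_disjoint fg) (yN_in_eN fN)).
Qed.

Lemma xN_neq_yN : xN f != yN g.
Proof.
have [<-|fg] := eqVneq f g; first by rewrite eq_sym yN_neq_xN.
apply: contraTneq (yN_in_eN gN) => <-.
by rewrite (disjointFr (eN_disjoint fg) (xN_in_eN fN)).
Qed.

Lemma vN_neq : f != g -> vN f != vN g.
Proof.
move=> fg; apply: contraTneq (vN_in gN) => <-.
by case: N_aux => _ /(_ f g fN gN fg)/disjointFr/(_ (vN_in fN)) ->.
Qed.

Lemma vN_neq_yN : vN f != yN g.
Proof. exact: neq_notin_VM (vN_notin_VM fN) (yN_in_VM gN). Qed.

Lemma vN_neq_xN : vN f != xN g.
Proof. exact: neq_notin_VM (vN_notin_VM fN) (xN_in_VM gN). Qed.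

End TwoEdgesOfN.


Lemma free_colours (R : {set {set V}}) : R \subset N -> (#|R| <= t)%N ->
  exists a : {set V} -> 'I_n,
    (forall f, f \in R -> a f \in C0 M /\ cedge col (a f) (vN f) (xN f)) /\
    {in R &, injective a}.
Proof.
move Hk : #|R| => k; elim: k R Hk => [|k IH] R cR sRN Rt.
  by exists (fun=> de.2); split=> [f|f g]; rewrite (card0_eq cR) inE.
have /set0Pn[f fR] : R != set0 by rewrite -card_gt0 cR.
have fN : f \in N by exact: (subsetP sRN).
have cR' : #|R :\ f| = k by move: cR; rewrite (cardsD1 f R) fR => -[].
have [a' [Ha' Ia']] :=
  IH (R :\ f) cR' (subset_trans (subsetDl _ _) sRN) (ltnW Rt).
have : (0 < #|cols_between col (C0 M) (vN f) (xN f) :\: a' @: (R :\ f)|)%N.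
  rewrite cardsD subn_gt0.
  apply: leq_ltn_trans (subset_leq_card (subsetIr _ _)) _.
  apply: leq_ltn_trans (leq_imset_card a' (R :\ f)) _.
  by rewrite cR'; exact: leq_trans Rt (free_colours_vN_xN fN).
rewrite card_gt0 => /set0Pn[c]; rewrite inE => /andP[ca'].
rewrite inE => /andP[cC0 ce].
exists (fun g => if g == f then c else a' g); split.
  move=> g gR; case: eqVneq => [-> //|gf].
  by apply: Ha'; rewrite !inE gf.
have a'R g : g \in R -> g != f -> a' g != c.
  by move=> gR gf; apply: contraNneq ca' => <-; apply: imset_f; rewrite !inE gf.
move=> g g' gR g'R /=.
case: eqVneq => [-> | gf]; case: eqVneq => [-> // | g'f] e.
- by move: (a'R g' g'R g'f); rewrite -e eqxx.
- by move: (a'R g gR gf); rewrite e eqxx.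
- by apply: Ia'; rewrite // !inE ?gf ?g'f.
Qed.

Section Switching.
Variables (D R : {set {set V}}) (A : {set {set V} * 'I_n}).
Variable a : {set V} -> 'I_n.
Hypotheses (sDN : D \subset N) (sRD : R \subset D).
Hypothesis a_free : forall f, f \in R -> a f \in C0 M /\ cedge col (a f) (vN f) (xN f).
Hypothesis a_inj : {in R &, injective a}.
Hypothesis A_rainbow : is_rainbow_matching col A.
Hypothesis A_vertices : forall e, e \in A -> forall z, z \in e.1 ->
  z \notin VM M \/ exists2 f, f \in D & z \in (eN f).1.
Hypothesis A_avoids_R : forall e, e \in A -> forall f, f \in R ->
  (vN f \notin e.1) && (xN f \notin e.1).
Hypothesis A_colours : forall e, e \in A -> exists2 f, f \in D & e.2 = cN f.

Definition kept := M :\: eN @: D.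
Definition rotated := [set ([set vN f; xN f], a f) | f in R].

Let sRN := subset_trans sRD sDN.

Lemma kept_rainbow : is_rainbow_matching col kept.
Proof. exact: rainbow_matchingS (subsetDl _ _) M_rainbow. Qed.

Lemma rotated_rainbow : is_rainbow_matching col rotated.
Proof.
split=> [e /imsetP[f fR ->]|e e' /imsetP[f fR ->] /imsetP[g gR ->] ne
        |e e' /imsetP[f fR ->] /imsetP[g gR ->] ne].
- by apply: cedge_is_edge; case: (a_free fR).
- have fg : f != g by apply: contraNneq ne => ->.
  have fN := subsetP sRN f fR; have gN := subsetP sRN g gR.
  rewrite -setI_eq0; apply/eqP/setP => z; rewrite !inE.
  apply/negP => /andP[/orP[]/eqP-> /orP[]/eqP e1].
  + by move: (vN_neq fN gN fg); rewrite e1 eqxx.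
  + by move: (vN_neq_xN fN gN); rewrite e1 eqxx.
  + by move: (vN_neq_xN gN fN); rewrite e1 eqxx.
  + by move: (xN_neq fN gN fg); rewrite e1 eqxx.
- have fg : f != g by apply: contraNneq ne => ->.
  by apply: contra fg => /eqP/a_inj-> //.
Qed.

Lemma kept_rotated_compatible e e' : e \in kept -> e' \in rotated ->
  rainbow_compatible e e'.
Proof.
rewrite inE => /andP[eE eM] /imsetP[f fR ->].
have fN := subsetP sRN f fR.
have neE : e != eN f.
  by apply: contraNneq eE => ->; apply: imset_f; exact: subsetP sRD f fR.
apply/andP; split.
- rewrite -setI_eq0; apply/eqP/setP => z; rewrite !inE; apply/negP.
  move=> /andP[ze /orP[]/eqP zf]; subst z.
  + by move: (vN_notin_VM fN); rewrite (_ : vN f \in VM M) //; apply/VMP; exists e.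
  + by move: (notin_eN fN eM neE (xN_in_eN fN)); rewrite ze.
- by rewrite /=; apply: contraTneq (proj1 (a_free fR)) => <-; exact: notin_C0.
Qed.

Lemma kept_rotated_A_compatible e e' : e \in kept :|: rotated -> e' \in A ->
  rainbow_compatible e e'.
Proof.
move=> + e'A; rewrite inE => /orP[|/imsetP[f fR ->]].
- rewrite inE => /andP[eE eM]; have [g gD eg] := A_colours e'A.
  have gN := subsetP sDN g gD.
  have neE : e != eN g by apply: contraNneq eE => ->; apply: imset_f.
  apply/andP; split; last by rewrite eg; exact: M_colour_neq eM (eN_in_M gN) neE.
  rewrite -setI_eq0; apply/eqP/setP => z; rewrite !inE; apply/negP => /andP[ze ze'].
  case: (A_vertices e'A ze') => [|[h hD zh]].
    by apply/negP; rewrite negbK; apply/VMP; exists e.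
  have hN := subsetP sDN h hD.
  have neh : e != eN h by apply: contraNneq eE => ->; apply: imset_f.
  by move: (notin_eN hN eM neh zh); rewrite ze.
- have [g gD cg] := A_colours e'A; have /andP[vf xf] := A_avoids_R e'A fR.
  apply/andP; split; rewrite /= ?cg.
    rewrite -setI_eq0; apply/eqP/setP => z; rewrite !inE; apply/negP.
    by move=> /andP[/orP[]/eqP-> ze]; [move: vf|move: xf]; rewrite ze.
  apply: contraTneq (proj1 (a_free fR)) => ->.
  exact: notin_C0 (eN_in_M (subsetP sDN g gD)).
Qed.

Lemma kept_rotated_rainbow : is_rainbow_matching col (kept :|: rotated).
Proof. exact: rainbow_matchingU kept_rainbow rotated_rainbow kept_rotated_compatible. Qed.

Lemma switched_rainbow : is_rainbow_matching col (kept :|: rotated :|: A).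
Proof.
exact: rainbow_matchingU kept_rotated_rainbow A_rainbow kept_rotated_A_compatible.
Qed.

Lemma card_switched :
  #|kept :|: rotated :|: A| = (#|M| - #|D| + #|R| + #|A|)%N.
Proof.
have cE : #|eN @: D| = #|D|.
  apply: card_in_imset => f g fD gD; apply: contra_eq.
  exact: eN_neq (subsetP sDN f fD) (subsetP sDN g gD).
have cRot : #|rotated| = #|R|.
  apply: card_in_imset => f g fR gR [efg _]; apply/eqP; apply: contraT => fg.
  have fN := subsetP sRN f fR; have gN := subsetP sRN g gR.
  have : vN f \in [set vN g; xN g] by rewrite -efg !inE eqxx.
  by rewrite !inE (negbTE (vN_neq fN gN fg)) (negbTE (vN_neq_xN fN gN)).
have sEM : eN @: D \subset M.
  by apply/subsetP => _ /imsetP[f fD ->]; exact: eN_in_M (subsetP sDN f fD).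
rewrite (card_rainbow_matchingU kept_rotated_rainbow kept_rotated_A_compatible).
rewrite (card_rainbow_matchingU kept_rainbow kept_rotated_compatible).
by rewrite cardsD (setIidPr sEM) cE cRot.
Qed.

End Switching.

Lemma no_switch (D R : {set {set V}}) (A : {set {set V} * 'I_n}) :
  D \subset N -> R \subset D -> (#|R| <= t)%N ->
  is_rainbow_matching col A ->
  (forall e, e \in A -> forall z, z \in e.1 ->
     z \notin VM M \/ exists2 f, f \in D & z \in (eN f).1) ->
  (forall e, e \in A -> forall f, f \in R -> (vN f \notin e.1) && (xN f \notin e.1)) ->
  (forall e, e \in A -> exists2 f, f \in D & e.2 = cN f) ->
  (#|A| + #|R| <= #|D|)%N.
Proof.
move=> sDN sRD Rt rA Av AR Ac.
have [a [a_free a_inj]] := free_colours (subset_trans sRD sDN) Rt.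
have := proj2 M_max _ (switched_rainbow sDN sRD a_free a_inj rA Av AR Ac).
rewrite card_switched //.
have : (#|D| <= #|M|)%N.
  rewrite -(card_in_imset (f := eN)); last first.
    move=> f g fD gD; apply: contra_eq.
    exact: eN_neq (subsetP sDN f fD) (subsetP sDN g gD).
  apply: subset_leq_card; apply/subsetP => _ /imsetP[f fD ->].
  exact: eN_in_M (subsetP sDN f fD).
lia.
Qed.

Hypothesis three_le_t : (3 <= t)%N.

Lemma cN_not_yN_yN f g h : f \in N -> g \in N -> h \in N -> f != g ->
  ~~ cedge col (cN h) (yN f) (yN g).
Proof.
move=> fN gN hN fg; apply/negP => ce.
set D := [set f; g; h].
have sDN : D \subset N by apply/subsetP => z; rewrite !inE => /orP[/orP[]|]/eqP->.
apply: notF; have := no_switch sDN (subxx D) (leq_trans (card_set3_le f g h) three_le_t)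
  (rainbow_matching1 ce).
rewrite cards1 add1n ltnn; apply.
- move=> _ /set1P-> z /=; rewrite !inE => /orP[]/eqP->; right.
  + by exists f; [rewrite !inE eqxx|exact: yN_in_eN].
  + by exists g; [rewrite !inE eqxx orbT|exact: yN_in_eN].
- move=> _ /set1P-> r rD /=; have rN := subsetP sDN r rD.
  by rewrite !inE !negb_or !vN_neq_yN ?xN_neq_yN.
- by move=> _ /set1P->; exists h; rewrite // !inE eqxx orbT.
Qed.

Lemma cN_edge_yN_outside f h u : f \in N -> h \in N -> u \notin VM M ->
  cedge col (cN h) (yN f) u -> u = vN f \/ u = vN h.
Proof.
move=> fN hN uV ce.
have [->|uf] := eqVneq u (vN f); first by left.
have [->|uh] := eqVneq u (vN h); first by right.
exfalso; set D := [set f; h].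
have sDN : D \subset N by apply/subsetP => z; rewrite !inE => /orP[]/eqP->.
have D2 : (#|D| <= t)%N by rewrite cards2; case: (_ != _); exact: leq_trans three_le_t.
apply: notF; have := no_switch sDN (subxx D) D2 (rainbow_matching1 ce).
rewrite cards1 add1n ltnn; apply.
- move=> _ /set1P-> z /=; rewrite !inE => /orP[]/eqP->; last by left.
  by right; exists f; [rewrite !inE eqxx|exact: yN_in_eN].
- move=> _ /set1P-> r rD /=; have rN := subsetP sDN r rD.
  rewrite !inE !negb_or vN_neq_yN // xN_neq_yN // (eq_sym (xN r)).
  rewrite (neq_notin_VM uV (xN_in_VM rN)) /= ?andbT.
  by move: rD => /set2P[]->; rewrite eq_sym.
- by move=> _ /set1P->; exists h; rewrite // !inE eqxx orbT.
Qed.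

Lemma cN_edge_outside h u u' : h \in N -> u \notin VM M -> u' \notin VM M ->
  cedge col (cN h) u u' -> u = vN h \/ u' = vN h.
Proof.
move=> hN uV u'V ce.
have [->|uh] := eqVneq u (vN h); first by left.
have [->|u'h] := eqVneq u' (vN h); first by right.
exfalso.
have sDN : [set h] \subset N by rewrite sub1set.
have D1 : (#|[set h]| <= t)%N by rewrite cards1; exact: leq_trans three_le_t.
apply: notF; have := no_switch sDN (subxx _) D1 (rainbow_matching1 ce).
rewrite !cards1; apply.
- by move=> _ /set1P-> z /=; rewrite !inE => /orP[]/eqP->; left.
- move=> _ /set1P-> r /set1P-> /=.
  rewrite !inE !negb_or eq_sym uh eq_sym u'h.
  rewrite !(eq_sym (xN h)) (neq_notin_VM uV (xN_in_VM hN)).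
  by rewrite (neq_notin_VM u'V (xN_in_VM hN)).
- by move=> _ /set1P->; exists h; rewrite ?inE.
Qed.

(* The switch replacing e_g = x_g y_g by x_g w and y_g v_g, in colours c_h
   and c_k, with R = D minus g. *)
Lemma no_double_switch (D : {set {set V}}) g h k w :
  D \subset N -> g \in D -> h \in D -> k \in D -> (#|D| <= 4)%N -> h != k ->
  cedge col (cN h) (xN g) w -> cedge col (cN k) (yN g) (vN g) ->
  w != vN g -> w != yN g -> w != xN g ->
  w \notin VM M \/ (exists2 g', g' \in D & w \in (eN g').1) ->
  (forall r, r \in D -> r != g -> (vN r != w) && (xN r != w)) -> False.
Proof.
move=> sDN gD hD kD D4 hk ce1 ce2 wvg wyg wxg w_src wR.
have gN := subsetP sDN g gD; have hN := subsetP sDN h hD; have kN := subsetP sDN k kD.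
have dis : [disjoint [set xN g; w] & [set yN g; vN g]].
  rewrite -setI_eq0; apply/eqP/setP => z; rewrite !inE; apply/negP.
  move=> /andP[/orP[]/eqP-> /orP[]/eqP e].
  - by move: (yN_neq_xN gN); rewrite e eqxx.
  - by move: (vN_neq_xN gN gN); rewrite e eqxx.
  - by move: wyg; rewrite e eqxx.
  - by move: wvg; rewrite e eqxx.
have R3 : (#|D :\ g| <= t)%N.
  by apply: leq_trans three_le_t; move: D4; rewrite (cardsD1 g D) gD.
apply: notF; have neqA : ([set xN g; w], cN h) != ([set yN g; vN g], cN k).
  by apply: contraNneq (cN_neq hN kN hk) => -[_ ->].
have := no_switch sDN (subsetDl D [set g]) R3
  (rainbow_matching2 ce1 ce2 (cN_neq hN kN hk) dis).
rewrite cards2 neqA (cardsD1 g D) gD /= addSn ltnn; apply.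
- move=> _ /set2P[]-> z /=; rewrite !inE => /orP[]/eqP->.
  + by right; exists g => //; exact: xN_in_eN.
  + exact: w_src.
  + by right; exists g => //; exact: yN_in_eN.
  + by left; exact: vN_notin_VM.
- move=> _ /set2P[]-> r /setD1P[rg rD] /=; have rN := subsetP sDN r rD;
    have /andP[vw xw] := wR r rD rg; rewrite !inE !negb_or ?vw ?xw ?andbT.
  + by rewrite vN_neq_xN // xN_neq.
  + by rewrite vN_neq_yN // vN_neq // xN_neq_yN // eq_sym vN_neq_xN.
- by move=> _ /set2P[]->; [exists h|exists k].
Qed.

Lemma cN_edge_xN_outside g h k w : g \in N -> h \in N -> k \in N -> h != k ->
  w \notin VM M -> w != vN g -> w != vN h -> w != vN k ->
  cedge col (cN k) (yN g) (vN g) -> ~~ cedge col (cN h) (xN g) w.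
Proof.
move=> gN hN kN hk wV wg wh wk ce2; apply/negP => ce1.
set D := [set g; h; k].
have sDN : D \subset N by apply/subsetP => z; rewrite !inE => /orP[/orP[]|]/eqP->.
apply: (@no_double_switch D g h k w sDN) => //.
- by rewrite !inE eqxx.
- by rewrite !inE eqxx orbT.
- by rewrite !inE eqxx orbT.
- exact: leq_trans (card_set3_le _ _ _) _.
- exact: neq_notin_VM wV (yN_in_VM gN).
- exact: neq_notin_VM wV (xN_in_VM gN).
- by left.
- move=> r; rewrite !inE => /orP[/orP[]|]/eqP-> rg; rewrite ?eqxx // in rg.
  + by rewrite eq_sym wh eq_sym (neq_notin_VM wV (xN_in_VM hN)).
  + by rewrite eq_sym wk eq_sym (neq_notin_VM wV (xN_in_VM kN)).
Qed.

Lemma cN_edge_xN_yN g h k g' : g \in N -> h \in N -> k \in N -> g' \in N ->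
  h != k -> g' != g ->
  cedge col (cN k) (yN g) (vN g) -> ~~ cedge col (cN h) (xN g) (yN g').
Proof.
move=> gN hN kN g'N hk g'g ce2; apply/negP => ce1.
set D := [set g; h; k; g'].
have sDN : D \subset N by apply/subsetP => z; rewrite !inE => /orP[/orP[/orP[]|]|]/eqP->.
apply: (@no_double_switch D g h k (yN g') sDN) => //.
- by rewrite !inE eqxx.
- by rewrite !inE eqxx orbT.
- by rewrite !inE eqxx orbT.
- exact: card_set4_le.
- by rewrite eq_sym vN_neq_yN.
- exact: yN_neq.
- by rewrite eq_sym xN_neq_yN.
- by right; exists g'; [rewrite !inE eqxx orbT|exact: yN_in_eN].
- by move=> r rD rg; have rN := subsetP sDN r rD; rewrite vN_neq_yN // xN_neq_yN.
Qed.

Definition XN := xN @: N.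
Definition YN := yN @: N.
Definition VM_off_MN := VM M :\: (XN :|: YN).
Definition joined h := [set f in N | cedge col (cN h) (yN f) (vN f)].
Definition unjoined h := N :\: joined h.
Definition exceptional h := [set g in joined h | [exists w,
  cedge col (cN h) (xN g) w &&
  (((w \notin VM M) && (w != vN g) && (w != vN h)) || ((w \in YN) && (w != yN g)))]].

Section OneColourClass.
Variable h : {set V}.
Hypothesis hN : h \in N.

Let c := cN h.
Let covered := cover (col c).
Let spare := [set u in covered | (u \notin VM M) && (u \notin vN @: joined h)]
         :|: [set u in covered | u \in yN @: unjoined h].
Let near_vh := [set u | (u == vN h) || cedge col c u (vN h)].
Let partner u := odflt d [pick w | cedge col c u w].

Lemma partnerP u : u \in covered -> cedge col c u (partner u).
Proof.
move=> /(cover_cedge col_big)[w ce]; rewrite /partner.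
by case: pickP => [//|/(_ w)]; rewrite ce.
Qed.

Lemma card_spare_near_vh : (#|spare :&: near_vh| <= 3)%N.
Proof.
set SU := [set u | (u \notin VM M) && (u != vN h) && cedge col c u (vN h)].
set SY := [set u in YN | cedge col c u (vN h)].
have sub : spare :&: near_vh \subset [set vN h] :|: SU :|: SY.
  apply/subsetP => u; rewrite !inE.
  move=> /andP[/orP[]/andP[uP uT] /orP[/eqP->|ce]]; rewrite ?eqxx //.
  - by case/andP: uT => uV _; case: eqVneq => [-> //|uv]; rewrite uV ce.
  - case/imsetP: uT ce => f /setDP[fN _] -> ce; rewrite ce andbT.
    by apply/orP; right; rewrite andbT; apply: imset_f.
have SU1 : (#|SU| <= 1)%N.
  apply/card_le1_eqP => x y; rewrite !inE.
  move=> /andP[/andP[xV xh] cx] /andP[/andP[yV yh] cy].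
  apply: contraTeq isT; rewrite eq_sym => xy.
  have ce := cedge_trans col_triv cx (cedge_sym cy) xy.
  by case: (cN_edge_outside hN xV yV ce) => e; [move: xh|move: yh]; rewrite e eqxx.
have SY1 : (#|SY| <= 1)%N.
  apply/card_le1_eqP => x y; rewrite !inE => /andP[/imsetP[f fN ->] cx].
  move=> /andP[/imsetP[g gN ->] cy]; have [-> //|fg] := eqVneq f g.
  have ce := cedge_trans col_triv cx (cedge_sym cy) (yN_neq fN gN fg).
  by move: (cN_not_yN_yN fN gN hN fg); rewrite ce.
apply: leq_trans (subset_leq_card sub) _.
apply: leq_trans (leq_card_setU _ _).1 _; rewrite -(addn1 2); apply: leq_add SY1.
apply: leq_trans (leq_card_setU _ _).1 _; rewrite cards1 add1n ltnS; exact: SU1.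
Qed.

Lemma far_spareP u : u \in spare :\: near_vh ->
  [/\ u \in covered, u != vN h, ~~ cedge col c u (vN h) &
    ((u \notin VM M) && (u \notin vN @: joined h) \/
     exists2 f, f \in unjoined h & u = yN f)].
Proof.
rewrite !inE negb_or => /andP[/andP[uv uc] /orP[/and3P[uP uV uG]|/andP[uP uT]]].
  by split => //; left; rewrite uV uG.
by case/imsetP: uT => f fU eu; split => //; right; exists f.
Qed.

Lemma unjoinedP f : f \in unjoined h -> f \in N /\ ~~ cedge col c (yN f) (vN f).
Proof. by rewrite !inE => /andP[+ fN]; rewrite fN. Qed.

Lemma partner_far_spare u w : u \in spare :\: near_vh -> cedge col c u w ->
  [/\ w \in VM M, w \notin YN &
      forall g, g \in N -> w = xN g -> g \in unjoined h \/ g \in exceptional h].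
Proof.
move=> /far_spareP[uP uh uch uT] ce.
have exceptionalI g w' : g \in joined h -> cedge col c (xN g) w' ->
    ((w' \notin VM M) && (w' != vN g) && (w' != vN h)) || ((w' \in YN) && (w' != yN g)) ->
    g \in exceptional h.
  by move=> gG ce' cond; rewrite inE gG /=; apply/existsP; exists w'; rewrite ce'.
have joinedP g : g \in N -> g \in unjoined h \/ g \in joined h.
  by move=> gN; rewrite inE gN andbT; case: (g \in joined h); [right|left].
case: uT => [/andP[uV uG]|[f /unjoinedP[fN fce] eu]]; last subst u.
- split.
  + apply: contraNT uch => wV.
    by case: (cN_edge_outside hN uV wV ce) => e; [move: uh; rewrite e eqxx|rewrite -e].
  + apply/negP => /imsetP[g gN we]; rewrite we in ce.
    case: (cN_edge_yN_outside gN hN uV (cedge_sym ce)) => e.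
      2: by move: uh; rewrite e eqxx.
    by move: uG; rewrite e imset_f // inE gN -e cedge_sym.
  + move=> g gN we; rewrite we in ce; case: (joinedP g gN) => gG; [by left|right].
    have ug : u != vN g by apply: contraNneq uG => ->; apply: imset_f.
    by apply: (exceptionalI g u gG (cedge_sym ce)); rewrite uV ug uh.
- split.
  + apply: contraNT fce => wV.
    by case: (cN_edge_yN_outside fN hN wV ce) => e; [|move: uch]; rewrite -e ce.
  + apply/negP => /imsetP[g gN we]; rewrite we in ce.
    have [fg|fg] := eqVneq f g; first by move: ce; rewrite fg (negbTE (cedgexx _ _ _)).
    by move: (cN_not_yN_yN fN gN hN fg); rewrite ce.
  + move=> g gN we; rewrite we in ce; case: (joinedP g gN) => gG; [by left|right].
    apply: (exceptionalI g (yN f) gG (cedge_sym ce)).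
    have fg : f != g by apply: contraNneq fce => ->; case/setIdP: gG.
    have fY : yN f \in YN by apply: imset_f.
    by rewrite fY (yN_neq fN gN fg) orbT.
Qed.

Lemma far_spare_independent u u' : u \in spare :\: near_vh ->
  u' \in spare :\: near_vh -> u != u' -> ~~ cedge col c u u'.
Proof.
move=> /far_spareP[_ uh uch uT] /far_spareP[_ u'h u'ch u'T] uu'; apply/negP => ce.
have y_outside u0 f : u0 != vN h -> u0 \notin VM M -> f \in unjoined h ->
    cedge col c (yN f) u0 -> False.
  move=> u0h u0V /unjoinedP[fN fce] ce'.
  case: (cN_edge_yN_outside fN hN u0V ce') => e.
  - by move: fce; rewrite -e ce'.
  - by move: u0h; rewrite e eqxx.
case: uT => [/andP[uV _]|[f fU ef]]; case: u'T => [/andP[u'V _]|[f' f'U ef']].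
- by case: (cN_edge_outside hN uV u'V ce) => e; [move: uh|move: u'h]; rewrite e eqxx.
- by apply: (y_outside u f') => //; rewrite -ef' cedge_sym.
- by apply: (y_outside u' f) => //; rewrite -ef.
- have [fN _] := unjoinedP fU; have [f'N _] := unjoinedP f'U.
  have [ff'|ff'] := eqVneq f f'; first by move: uu'; rewrite ef ef' ff' eqxx.
  by move: (cN_not_yN_yN fN f'N hN ff'); rewrite -ef -ef' ce.
Qed.

(* Far spare vertices are pairwise non-adjacent in colour c_h, so two of them
   sharing a partner would be adjacent by transitivity inside a clique. *)
Lemma card_far_spare :
  (#|spare :\: near_vh| <= #|unjoined h| + #|exceptional h| + #|VM_off_MN|)%N.
Proof.
have inj : {in spare :\: near_vh &, injective partner}.
  move=> u u' uT u'T e; apply: contraTeq isT => uu'.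
  have [uP _ _ _] := far_spareP uT; have [u'P _ _ _] := far_spareP u'T.
  have ce : cedge col c u u'.
    by apply: (cedge_trans col_triv (partnerP uP)); rewrite // e cedge_sym ?partnerP.
  by move: (far_spare_independent uT u'T uu'); rewrite ce.
rewrite -(card_in_imset inj).
have sub : partner @: (spare :\: near_vh) \subset
    (xN @: (unjoined h :|: exceptional h)) :|: VM_off_MN.
  apply/subsetP => _ /imsetP[u uT ->].
  have [uP _ _ _] := far_spareP uT.
  have [wV wY wX] := partner_far_spare uT (partnerP uP).
  rewrite inE; case: (boolP (partner u \in XN)) => [/imsetP[g gN eg]|nX].
    by rewrite eg imset_f // inE; case: (wX g gN eg) => ->; rewrite ?orbT.
  by rewrite /VM_off_MN !inE wV negb_or nX wY orbT.
apply: leq_trans (subset_leq_card sub) _.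
apply: leq_trans (leq_card_setU _ _).1 _; rewrite leq_add2r.
exact: leq_trans (leq_imset_card _ _) (leq_card_setU _ _).1.
Qed.

Lemma card_colour_class_le :
  (#|covered| + #|unjoined h| <= 3 * #|N| + #|exceptional h| + 2 * #|VM_off_MN| + 3)%N.
Proof.
have sub : covered \subset
    spare :|: vN @: joined h :|: yN @: joined h :|: XN :|: VM_off_MN.
  apply/subsetP => u uP; rewrite !inE uP /=.
  case: (boolP (u \in VM M)) => uV /=.
    2: by case: (u \in vN @: joined h); rewrite ?orbT.
  case: (boolP (u \in XN)) => uX; first by rewrite !orbT.
  case: (boolP (u \in YN)) => [/imsetP[f fN ->]|uY].
    2: by apply/orP; right; rewrite andbT negb_or; apply/andP.
  case: (boolP (f \in joined h)) => fG; first by rewrite (imset_f yN fG) !orbT.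
  by rewrite (imset_f yN (_ : f \in unjoined h)) // inE fG.
have cGB : (#|joined h| + #|unjoined h| = #|N|)%N.
  have sG : joined h \subset N by apply/subsetP => f; rewrite inE => /andP[].
  by rewrite /unjoined cardsD (setIidPr sG) subnKC // subset_leq_card.
have cT : (#|spare| <= #|unjoined h| + #|exceptional h| + #|VM_off_MN| + 3)%N.
  rewrite -(cardsID near_vh spare) addnC.
  exact: leq_add card_far_spare card_spare_near_vh.
have cX : (#|XN| <= #|N|)%N by exact: leq_imset_card.
have cv : (#|vN @: joined h| <= #|joined h|)%N by exact: leq_imset_card.
have cy : (#|yN @: joined h| <= #|joined h|)%N by exact: leq_imset_card.
move: sub cv cy; set VJ := vN @: joined h; set YJ := yN @: joined h.
move=> /subset_leq_card sub cv cy.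
have := (leq_card_setU (spare :|: VJ :|: YJ :|: XN) VM_off_MN).1.
have := (leq_card_setU (spare :|: VJ :|: YJ) XN).1.
have := (leq_card_setU (spare :|: VJ) YJ).1.
have := (leq_card_setU spare VJ).1.
lia.
Qed.

End OneColourClass.

Lemma card_exceptional_owners_le g : g \in N ->
  (#|[set h in N | g \in exceptional h]| <= 2)%N.
Proof.
move=> gN; case: (set_0Vmem [set h in N | g \in exceptional h]) => [->|[h0]].
  by rewrite cards0.
rewrite !inE => /andP[h0N /andP[/andP[_ gjoined] /existsP[w0 /andP[ce0 w0_exc]]]].
have sub : [set h in N | g \in exceptional h] \subset h0 |: [set k in N | vN k == w0].
  apply/subsetP => k; rewrite !inE => /andP[kN /andP[/andP[_ ck] _]].
  have [//|kh0] := eqVneq k h0; rewrite kN /=.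
  case/orP: w0_exc => [/andP[/andP[w0V w0g] w0h]|/andP[/imsetP[g' g'N ew] w0g]].
  - apply: contraTT ce0 => kw.
    have h0k : h0 != k by rewrite eq_sym.
    have w0k : w0 != vN k by rewrite eq_sym.
    exact: cN_edge_xN_outside gN h0N kN h0k w0V w0g w0h w0k ck.
  - rewrite {}ew in ce0 w0g; have g'g : g' != g by apply: contraNneq w0g => ->.
    have h0k : h0 != k by rewrite eq_sym.
    by move: (cN_edge_xN_yN gN h0N kN g'N h0k g'g ck); rewrite ce0.
apply: leq_trans (subset_leq_card sub) _.
rewrite cardsU1 -[2]/(1 + 1)%N leq_add //; first by case: (_ \notin _).
apply/card_le1_eqP => x y; rewrite !inE => /andP[xN /eqP ex] /andP[yN /eqP ey].
by apply: contraTeq isT => yx; move: (vN_neq yN xN yx); rewrite ex ey eqxx.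
Qed.

Lemma sum_card_exceptional : (\sum_(h in N) #|exceptional h| <= 2 * #|N|)%N.
Proof.
under eq_bigr => h _.
  rewrite (@card_sum_mem _ _ N); last first.
    by apply/subsetP => g; rewrite !inE => /andP[/andP[]].
over.
rewrite exchange_big /= mulnC -sum_nat_const.
by apply: leq_sum => g gN; rewrite sum_nat_of_bool card_exceptional_owners_le.
Qed.

Lemma M_N_eq : M_N M N = eN @: N.
Proof.
apply/setP => e; apply/idP/imsetP.
- rewrite inE => /andP[eM /existsP[f /andP[fN /set0Pn[z]]]].
  rewrite inE => /andP[zf ze]; exists f => //.
  move: zf; rewrite {1}(N_edgeE fN) !inE => /orP[]/eqP ez.
  + by move: (vN_notin_VM fN); rewrite -ez (_ : z \in VM M) //; apply/VMP; exists e.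
  + by apply: (M_eq_of_mem eM (eN_in_M fN) ze); rewrite ez xN_in_eN.
- case=> f fN ->; rewrite inE eN_in_M //=; apply/existsP; exists f; rewrite fN /=.
  by apply/set0Pn; exists (xN f); rewrite inE xN_in // xN_in_eN.
Qed.

Lemma cN_inj : {in N &, injective cN}.
Proof. by move=> f g fN gN; apply: contra_eq; exact: cN_neq. Qed.

Lemma C_N_eq : C_N M N = cN @: N.
Proof. by rewrite /C_N /colsM M_N_eq -imset_comp. Qed.

Lemma card_C_N : #|C_N M N| = #|N|.
Proof. by rewrite C_N_eq (card_in_imset cN_inj). Qed.

Lemma card_joining_colours g :
  #|[set h in N | cedge col (cN h) (yN g) (vN g)]| =
  #|cols_between col (C_N M N) (vN g) (yN g)|.
Proof.
rewrite -(card_in_imset (f := cN)); last first.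
  by move=> f f' /setIdP[fN _] /setIdP[f'N _]; exact: cN_inj.
apply: eq_card => c; rewrite /cols_between C_N_eq !inE; apply/imsetP/andP.
- case=> h /setIdP[hN ce] ->; split; [exact: imset_f|exact: cedge_sym].
- by case=> /imsetP[h hN ->] ce; exists h; rewrite // inE hN cedge_sym.
Qed.

(* Double counting of the pairs (h, g) in N x N according to whether colour
   c_h joins v_g and y_g. *)
Lemma sum_card_unjoined :
  (\sum_(h in N) #|unjoined h| +
   \sum_(g in N) #|cols_between col (C_N M N) (vN g) (yN g)| = #|N| * #|N|)%N.
Proof.
under eq_bigr => h _ do rewrite (@card_sum_mem _ _ N) ?subsetDl //.
rewrite exchange_big /= -big_split /= -sum_nat_const.
apply: eq_bigr => g gN; rewrite sum_nat_of_bool -card_joining_colours.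
rewrite -(cardsID [set h in N | cedge col (cN h) (yN g) (vN g)] N) addnC.
by congr (_ + _)%N; apply: eq_card => h; rewrite !inE ?gN;
  case: (h \in N); case: (cedge _ _ _ _).
Qed.

Lemma card_VM : (#|VM M| <= 2 * #|M|)%N.
Proof.
apply: leq_trans (card_bigcup_le _ _) _.
rewrite mulnC -sum_nat_const; apply: leq_sum => e eM.
by have /andP[/eqP -> _] := M_edge eM.
Qed.

Lemma card_VM_off_MN : (#|VM_off_MN| + 2 * #|N| <= 2 * #|M|)%N.
Proof.
have sXY : XN :|: YN \subset VM M.
  by apply/subsetP => z /setUP[]/imsetP[f fN ->]; [exact: xN_in_VM|exact: yN_in_VM].
have cX : #|XN| = #|N|.
  by apply: card_in_imset => f g fN gN; apply: contra_eq; exact: xN_neq.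
have cY : #|YN| = #|N|.
  by apply: card_in_imset => f g fN gN; apply: contra_eq; exact: yN_neq.
have dXY : XN :&: YN = set0.
  apply/setP => z; rewrite !inE; apply/negP => /andP[/imsetP[f fN ->] /imsetP[g gN e]].
  by move: (xN_neq_yN fN gN); rewrite e eqxx.
have cXY : #|XN :|: YN| = (2 * #|N|)%N.
  by rewrite cardsU dXY cards0 subn0 cX cY addnn mul2n.
rewrite /VM_off_MN cardsD (setIidPr sXY) cXY.
have := subset_leq_card sXY; have := card_VM; rewrite cXY; lia.
Qed.

Lemma card_M_le : (#|M| <= n)%N.
Proof.
have inj : {in M &, injective (fun e : {set V} * 'I_n => e.2)}.
  by move=> e e' eM e'M; apply: contra_eq; exact: M_colour_neq.
by rewrite -(card_in_imset inj); apply: leq_trans (max_card _) _; rewrite card_ord.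
Qed.

Lemma sum_card_colour_classes :
  (\sum_(h in N) #|cover (col (cN h))| + #|N| * #|N| <=
   \sum_(g in N) #|cols_between col (C_N M N) (vN g) (yN g)| +
   #|N| * (3 * #|N| + 2 * #|VM_off_MN| + 5))%N.
Proof.
have := sum_card_unjoined; have := sum_card_exceptional.
have : (\sum_(h in N) (#|cover (col (cN h))| + #|unjoined h|) <=
        \sum_(h in N) (3 * #|N| + #|exceptional h| + 2 * #|VM_off_MN| + 3))%N.
  by apply: leq_sum => h hN; exact: card_colour_class_le.
rewrite !big_split /= !sum_nat_const; set p := #|N|; lia.
Qed.

Lemma N_alphaP (R : realType) (alpha : R) f : f \in N_alpha col M N alpha ->
  f \in N /\
  (#|cols_between col (C_N M N) (vN f) (yN f)|%:R <= alpha * #|C_N M N|%:R)%R.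
Proof.
rewrite inE => /andP[fN /existsP[e /andP[eMN /existsP[x /existsP[y /existsP[v]]]]]].
case/and5P => /eqP ee xy /eqP ef vV ineq.
have eM : e \in M by case/setIdP: eMN.
have xV : x \in VM M by apply/VMP; exists e => //; rewrite ee !inE eqxx.
have := vN_in fN; rewrite {2}ef !inE => /orP[]/eqP ev.
  2: by move: (vN_notin_VM fN); rewrite ev xV.
have := xN_in fN; rewrite {2}ef !inE => /orP[]/eqP ex.
  by move: vV; rewrite -ex (xN_in_VM fN).
have eeN : e = eN f.
  by apply: (M_eq_of_mem eM (eN_in_M fN) _ (xN_in_eN fN)); rewrite ee ex !inE eqxx.
have ey : yN f = y.
  have : y \in (eN f).1 by rewrite -eeN ee !inE eqxx orbT.
  rewrite (eN_eq fN) !inE => /orP[/eqP eyx|/eqP //].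
  by move: xy; rewrite -ex eyx eqxx.
by rewrite ev ey.
Qed.

Lemma sum_card_cols_between_le (R : realType) (alpha : R) :
  ((\sum_(g in N) #|cols_between col (C_N M N) (vN g) (yN g)|)%:R <=
   #|N|%:R * #|N|%:R - (1 - alpha) * #|N|%:R * #|N_alpha col M N alpha|%:R :> R)%R.
Proof.
set Na := N_alpha col M N alpha.
have sNa : Na \subset N by apply/subsetP => f /N_alphaP[].
have -> : (#|N|%:R * #|N|%:R - (1 - alpha) * #|N|%:R * #|Na|%:R =
  \sum_(g in N) (#|N|%:R - (1 - alpha) * #|N|%:R * (g \in Na)%:R) :> R)%R.
  by rewrite sumrB sumr_const -mulr_sumr -natr_sum -card_sum_mem // mulr_natr.
rewrite natr_sum; apply: ler_sum => g gN.
have cle : (#|cols_between col (C_N M N) (vN g) (yN g)| <= #|N|)%N.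
  by rewrite -card_C_N; apply/subset_leq_card/subsetP => c /setIdP[].
case: (boolP (g \in Na)) => gA; last by rewrite mulr0 subr0 ler_nat.
have [_] := N_alphaP gA; rewrite card_C_N => /le_trans; apply; rewrite mulr1; lra.
Qed.

Lemma card_N_alpha_le (R : realType) (gamma alpha : R) :
  (0 <= gamma)%R -> (1 < gamma * n%:R)%R -> (0 < #|N|)%N ->
  (forall c, (3 - gamma) * n%:R <= #|cover (col c)|%:R)%R ->
  ((1 - gamma) * #|M|%:R <= #|N|%:R)%R ->
  ((1 - alpha) * #|N_alpha col M N alpha|%:R <= 20 * gamma * n%:R)%R.
Proof.
move=> g0 gn N0 Hcov HNM.
have Hsum := sum_card_colour_classes.
have Hcols := sum_card_cols_between_le alpha.
have HVM := card_VM_off_MN.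
have Hcover : (#|N|%:R * ((3 - gamma) * n%:R) <=
               (\sum_(h in N) #|cover (col (cN h))|)%:R :> R)%R.
  by rewrite natr_sum mulr_natl -sumr_const; apply: ler_sum => h _.
set p := #|N| in N0 HNM Hsum Hcols HVM Hcover.
set a := #|N_alpha col M N alpha| in Hcols *.
set z := #|VM_off_MN| in Hsum HVM.
have key : ((3 - gamma) * n%:R + (1 - alpha) * a%:R <= 3 * p%:R + 2 * z%:R + 5 :> R)%R.
  rewrite -(ler_pM2l (_ : 0 < p%:R :> R)%R) ?ltr0n //.
  move: Hsum; rewrite -(ler_nat R) !natrD !natrM.
  by move: Hcover Hcols; rewrite !mulrDr ?mulrA; lra.
apply: (count_arith g0 _ HNM _ gn key); first by rewrite ler_nat card_M_le.
by move: HVM; rewrite -(ler_nat R) natrD !natrM.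
Qed.

End AuxiliaryMatching.

Local Open Scope ring_scope.

Lemma gt1_mul_ge_archi_bound (R : realType) (gamma : R) (n : nat) : 0 < gamma ->
  (Num.Def.archi_bound gamma^-1 <= n)%N -> 1 < gamma * n%:R.
Proof.
move=> g0 n0n; rewrite -[X in X < _](mulfV (lt0r_neq0 g0)) ltr_pM2l //.
have gi0 : 0 <= gamma^-1 by rewrite invr_ge0 ltW.
by apply: lt_le_trans (archi_boundP gi0) _; rewrite ler_nat.
Qed.

Theorem lemma2p9 (R : realType) (gamma alpha : R) :
  0 < gamma -> 0 < alpha -> alpha < 1 ->
  exists n0 : nat, forall n : nat, (n0 <= n)%N ->
  forall (V : finType) (col : 'I_n -> {set {set V}})
         (M : {set {set V} * 'I_n}) (N : {set {set V}}),
    nv_multigraph col ((3 - gamma) * n%:R) ->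
    is_max_rainbow_matching col M ->
    aux_matching col M 7 N ->
    (1 - gamma) * #|M|%:R <= #|N|%:R ->
    #|N_alpha col M N alpha|%:R <= 20 * gamma / (1 - alpha) * n%:R.
Proof.
move=> g0 _ a1; exists (Num.Def.archi_bound gamma^-1).
move=> n n0n V col M N Hnv M_max N_aux HNM.
have col_triv c : trivIset (col c) by case: (Hnv c).
have col_big c K : K \in col c -> (2 <= #|K|)%N by case: (Hnv c) => _ H _; exact: H.
have Hcov c : (3 - gamma) * n%:R <= #|cover (col c)|%:R by case: (Hnv c).
rewrite mulrAC ler_pdivlMr ?subr_gt0 // mulrC.
have [N0|[f0 f0N]] := set_0Vmem N.
  have -> : N_alpha col M N alpha = set0 by apply/setP => f; rewrite !inE N0 inE.
  by rewrite cards0 mulr0 !mulr_ge0 ?ler0n ?ltW.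
have [N_edges _ _] := N_aux.
have [u [w [_ _ /bigcupP[e eM _] _]]] := N_edges f0 f0N.
apply: (card_N_alpha_le u e col_triv col_big M_max N_aux) => //.
- exact: ltW.
- exact: gt1_mul_ge_archi_bound.
- by apply/card_gt0P; exists f0.
Qed.
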